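(* Let $X$ be a finite connected simplicial complex, $\delta$ a cellular perversity, $\mathcal T(X,\delta)$ the topology with base $\mathcal B(X,\delta)=\{U(\Delta,\delta)\}$, and $\operatorname{Pre}\mathcal B(X,\delta)$ the category of presheaves on $\mathcal B(X,\delta)$ ordered by inclusion. Let $\Phi^+:\operatorname{Pre}\mathcal B(X,\delta)\to\mathcal{SH}(\mathcal T(X,\delta))$ be $\mathbf S\mapsto\tilde{\mathbf S}$ (with $\tilde S(W)=\varprojlim_{U(\Delta,\delta)\subseteq W}S(U(\Delta,\delta))$), and $\Phi^-:\mathcal{SH}(\mathcal T(X,\delta))\to\operatorname{Pre}\mathcal B(X,\delta)$ the restriction of a sheaf to the open sets $U(\Delta,\delta)$. Then $\Phi^+$ and $\Phi^-$ are quasi-inverse equivalences of categories.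
   Context: Simplices are open; $\Delta\leftrightarrow\Delta'$ means one is a face of the other. Cellular perversity: $\delta:\mathbb Z_{\ge0}\to\mathbb Z$, $\delta(0)=0$, bijective from each $\{0,\dots,k\}$ onto an interval $\{a,\dots,a+k\}$, $a\le0$; $\delta(\Delta)=\delta(\dim\Delta)$. Order: $\Delta\ge\Delta'$ iff there is a chain $\Delta=\Delta_0,\dots,\Delta_r=\Delta'$ ($r\ge0$) with $\Delta_i\leftrightarrow\Delta_{i+1}$, $\delta(\Delta_i)=\delta(\Delta_{i+1})+1$. Perverse star $U(\Delta,\delta)=\bigsqcup_{\Delta'\le\Delta}\Delta'$. $\mathcal{SH}(\mathcal T(X,\delta))$: sheaves of $\mathbb F$-vector spaces on $(X,\mathcal T(X,\delta))$. *)

From HB Require Import structures.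
From mathcomp Require Import all_boot all_order all_algebra.
From mathcomp Require Import boolp.
From Stdlib Require Import FunctionalExtensionality ProofIrrelevance.
Set Implicit Arguments. Unset Strict Implicit. Unset Printing Implicit Defensive.
Import Order.TTheory GRing.Theory Num.Theory.
Local Open Scope ring_scope.

Record sc := SC {
  sc_V : finType;
  faces : {set {set sc_V}};
  faces_ne : set0 \notin faces;
  faces_down : forall s t : {set sc_V}, s \in faces -> t \subset s -> t != set0 -> t \in faces
}.

Definition simplex (X : sc) := {s : {set sc_V X} | s \in faces X}.

Definition sc_edge (X : sc) : rel (sc_V X) := fun v w => [set v; w] \in faces X.
Definition sc_connected (X : sc) : Prop :=
  forall v w : sc_V X, [set v] \in faces X -> [set w] \in faces X ->
    connect (@sc_edge X) v w.

Definition dim (X : sc) (D : simplex X) : nat := (#|val D|).-1.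

Definition incident (X : sc) (D D' : simplex X) : bool :=
  (val D \subset val D') || (val D' \subset val D).

Definition cellular_perversity (d : nat -> int) : Prop :=
  d 0%N = 0 /\
  forall k : nat, exists a : int, a <= 0 /\
    (forall i j : nat, (i <= k)%N -> (j <= k)%N -> d i = d j -> i = j) /\
    (forall i : nat, (i <= k)%N -> a <= d i <= a + k%:Z) /\
    (forall z : int, a <= z <= a + k%:Z -> exists2 i : nat, (i <= k)%N & d i = z).

Definition pv (X : sc) (d : nat -> int) (D : simplex X) : int := d (dim D).

Definition pstep (X : sc) (d : nat -> int) : rel (simplex X) :=
  fun D D' => incident D D' && (pv d D == pv d D' + 1).

Definition pge (X : sc) (d : nat -> int) (D D' : simplex X) : bool :=
  connect (pstep d) D D'.

Definition pstar (X : sc) (d : nat -> int) (D : simplex X) : {set simplex X} :=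
  [set D' | pge d D D'].

(* The topology T(X,d).  Every open set of T(X,d) is a union of open   *)
(* simplices, so an open set is recorded by the set of simplices it     *)
(* contains.  Opens = unions of basic sets U(Delta,d).   *)
Definition basic (X : sc) (d : nat -> int) (W : {set simplex X}) : bool :=
  [exists D, W == pstar d D].

Definition is_open (X : sc) (d : nat -> int) (W : {set simplex X}) : bool :=
  [forall x in W, exists D, (x \in pstar d D) && (pstar d D \subset W)].

Lemma pstar_refl (X : sc) (d : nat -> int) (D : simplex X) : D \in pstar d D.
Proof. by rewrite inE /pge connect0. Qed.

Lemma basic_open (X : sc) (d : nat -> int) (W : {set simplex X}) :
  basic d W -> is_open d W.
Proof.
move=> /existsP [D /eqP ->]; apply/forallP => x; apply/implyP => xD.
by apply/existsP; exists D; rewrite xD subxx.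
Qed.

Definition bidx (X : sc) (d : nat -> int) := {W : {set simplex X} | basic d W}.
Definition oidx (X : sc) (d : nat -> int) := {W : {set simplex X} | is_open d W}.

(* Presheaves of F-vector spaces on a family P of subsets, ordered by   *)
(* inclusion (P = basic : presheaves on B(X,d); P = is_open :           *)
(* presheaves on the topology T(X,d)).                                  *)
Record psh (F : fieldType) (X : sc) (P : pred {set simplex X}) := Psh {
  ps_obj : {W : {set simplex X} | P W} -> lmodType F;
  ps_res : forall U W : {W : {set simplex X} | P W},
      val W \subset val U -> ps_obj U -> ps_obj W;
  ps_res_lin : forall (U W : {W : {set simplex X} | P W}) (h : val W \subset val U), linear (ps_res h);
  ps_res_id : forall (U : {W : {set simplex X} | P W}) (h : val U \subset val U) x, ps_res h x = x;
  ps_res_comp : forall (U W Z : {W : {set simplex X} | P W}) (h1 : val W \subset val U) (h2 : val Z \subset val W)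
      (h3 : val Z \subset val U) x, ps_res h2 (ps_res h1 x) = ps_res h3 x
}.
Arguments ps_obj {F X P} p U.
Arguments ps_res {F X P} p {U W} h _.
Arguments ps_res_lin {F X P} p {U W} h.
Arguments ps_res_id {F X P} p {U} h x.
Arguments ps_res_comp {F X P} p {U W Z} h1 h2 h3 x.

Record pshom (F : fieldType) (X : sc) (P : pred {set simplex X}) (S S' : psh F P) := PsHom {
  ph_fun : forall U : {W : {set simplex X} | P W}, ps_obj S U -> ps_obj S' U;
  ph_lin : forall U : {W : {set simplex X} | P W}, linear (@ph_fun U);
  ph_nat : forall (U W : {W : {set simplex X} | P W}) (h : val W \subset val U) x,
      @ph_fun W (ps_res S h x) = ps_res S' h (@ph_fun U x)
}.
Arguments ph_fun {F X P S S'} p U _.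
Arguments ph_lin {F X P S S'} p U.
Arguments ph_nat {F X P S S'} p {U W} h x.

Definition ps_iso (F : fieldType) (X : sc) (P : pred {set simplex X}) (S S' : psh F P)
  (f : pshom S S') : Prop :=
  exists g : pshom S' S,
    (forall U x, ph_fun g U (ph_fun f U x) = x) /\
    (forall U x, ph_fun f U (ph_fun g U x) = x).

Definition is_sheaf (F : fieldType) (X : sc) (d : nat -> int)
  (S : psh F (is_open d)) : Prop :=
  forall (W : oidx X d) (I : Type) (Wi : I -> oidx X d)
         (hi : forall i, val (Wi i) \subset val W),
    (forall x, x \in val W -> exists i, x \in val (Wi i)) ->
    (forall s t : ps_obj S W,
        (forall i, ps_res S (hi i) s = ps_res S (hi i) t) -> s = t) /\
    (forall si : forall i, ps_obj S (Wi i),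
        (forall i j (V : oidx X d) (h1 : val V \subset val (Wi i))
                (h2 : val V \subset val (Wi j)),
            ps_res S h1 (si i) = ps_res S h2 (si j)) ->
        exists s : ps_obj S W, forall i, ps_res S (hi i) s = si i).

Definition b2o (X : sc) (d : nat -> int) (U : bidx X d) : oidx X d :=
  exist (fun W => is_open d W) (val U) (basic_open (valP U)).

Definition PhiM (F : fieldType) (X : sc) (d : nat -> int) (S : psh F (is_open d)) :
  psh F (basic d) :=
  @Psh F X (basic d) (fun U => ps_obj S (b2o U))
    (fun U W h => ps_res S (U := b2o U) (W := b2o W) h)
    (fun U W h => ps_res_lin S (U := b2o U) (W := b2o W) h)
    (fun U h => ps_res_id S (U := b2o U) h)
    (fun U W Z h1 h2 h3 => ps_res_comp S (U := b2o U) (W := b2o W) (Z := b2o Z) h1 h2 h3).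

Definition PhiM_hom (F : fieldType) (X : sc) (d : nat -> int) (S S' : psh F (is_open d))
  (f : pshom S S') : pshom (PhiM S) (PhiM S') :=
  @PsHom F X (basic d) (PhiM S) (PhiM S') (fun U => ph_fun f (b2o U))
    (fun U => ph_lin f (b2o U))
    (fun U W h => ph_nat f (U := b2o U) (W := b2o W) h).

(* Phi^+ : S |-> S~, S~(W) = lim_{U(Delta,d) \subseteq W} S(U(Delta,d)), *)
(* realised as the space of compatible families.                        *)
Record limsec (F : fieldType) (X : sc) (d : nat -> int) (S : psh F (basic d))
  (W : {set simplex X}) := LimSec {
  ls_fam : forall U : bidx X d, val U \subset W -> ps_obj S U;
  ls_compat : forall (U U' : bidx X d) (hU : val U \subset W) (hU' : val U' \subset W)
      (h : val U' \subset val U), ps_res S h (ls_fam hU) = ls_fam hU'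
}.

Lemma limsec_ext (F : fieldType) (X : sc) (d : nat -> int) (S : psh F (basic d))
  (W : {set simplex X}) (a b : limsec S W) :
  (forall U h, ls_fam a (U := U) h = ls_fam b (U := U) h) -> a = b.
Proof.
case: a => fa ca; case: b => fb cb /= E.
have Efab : fa = fb.
  by apply: functional_extensionality_dep => U;
     apply: functional_extensionality_dep => h; exact: E.
subst fb; f_equal; exact: proof_irrelevance.
Qed.

HB.instance Definition _ (F : fieldType) (X : sc) (d : nat -> int) (S : psh F (basic d)) (W : {set simplex X}) := gen_eqMixin (@limsec F X d S W).
HB.instance Definition _ (F : fieldType) (X : sc) (d : nat -> int) (S : psh F (basic d)) (W : {set simplex X}) := gen_choiceMixin (@limsec F X d S W).

Lemma lin_zero (F : fieldType) (A B : lmodType F) (f : A -> B) : linear f -> f 0 = 0.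
Proof.
move=> L; have := L 1 0 0; rewrite !scale1r addr0 => /esym/eqP.
by rewrite -subr_eq0 addrK => /eqP.
Qed.
Lemma lin_add (F : fieldType) (A B : lmodType F) (f : A -> B) :
  linear f -> forall x y, f (x + y) = f x + f y.
Proof. by move=> L x y; have := L 1 x y; rewrite !scale1r. Qed.
Lemma lin_scale (F : fieldType) (A B : lmodType F) (f : A -> B) :
  linear f -> forall a x, f (a *: x) = a *: f x.
Proof. by move=> L a x; have := L a x 0; rewrite !addr0 (lin_zero L) addr0. Qed.
Lemma lin_opp (F : fieldType) (A B : lmodType F) (f : A -> B) : linear f -> forall x, f (- x) = - f x.
Proof. by move=> L x; rewrite -scaleN1r (lin_scale L) scaleN1r. Qed.

Definition ls_zero (F : fieldType) (X : sc) (d : nat -> int) (S : psh F (basic d)) (W : {set simplex X}) : @limsec (F : fieldType) (X : sc) (d : nat -> int) (S : psh F (basic d)) (W : {set simplex X}) :=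
  @LimSec (F : fieldType) (X : sc) (d : nat -> int) (S : psh F (basic d)) (W : {set simplex X}) (fun U _ => 0)
    (fun U U' hU hU' h => lin_zero (ps_res_lin S h)).

Program Definition ls_add (F : fieldType) (X : sc) (d : nat -> int) (S : psh F (basic d)) (W : {set simplex X}) (a b : @limsec F X d S W) : limsec S W :=
  @LimSec (F : fieldType) (X : sc) (d : nat -> int) (S : psh F (basic d)) (W : {set simplex X}) (fun U h => ls_fam a h + ls_fam b h) _.
Next Obligation. by rewrite (lin_add (ps_res_lin S h)) !ls_compat. Qed.

Program Definition ls_opp (F : fieldType) (X : sc) (d : nat -> int) (S : psh F (basic d)) (W : {set simplex X}) (a : @limsec F X d S W) : limsec S W :=
  @LimSec (F : fieldType) (X : sc) (d : nat -> int) (S : psh F (basic d)) (W : {set simplex X}) (fun U h => - ls_fam a h) _.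
Next Obligation. by rewrite (lin_opp (ps_res_lin S h)) !ls_compat. Qed.

Program Definition ls_scale (F : fieldType) (X : sc) (d : nat -> int) (S : psh F (basic d)) (W : {set simplex X}) (c : F) (a : @limsec F X d S W) : limsec S W :=
  @LimSec (F : fieldType) (X : sc) (d : nat -> int) (S : psh F (basic d)) (W : {set simplex X}) (fun U h => c *: ls_fam a h) _.
Next Obligation. by rewrite (lin_scale (ps_res_lin S h)) !ls_compat. Qed.

Lemma ls_addA (F : fieldType) (X : sc) (d : nat -> int) (S : psh F (basic d)) (W : {set simplex X}) : associative (@ls_add F X d S W).
Proof. by move=> a b c; apply: limsec_ext => U h /=; rewrite addrA. Qed.
Lemma ls_addC (F : fieldType) (X : sc) (d : nat -> int) (S : psh F (basic d)) (W : {set simplex X}) : commutative (@ls_add F X d S W).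
Proof. by move=> a b; apply: limsec_ext => U h /=; rewrite addrC. Qed.
Lemma ls_add0 (F : fieldType) (X : sc) (d : nat -> int) (S : psh F (basic d)) (W : {set simplex X}) : left_id (@ls_zero F X d S W) (@ls_add F X d S W).
Proof. by move=> a; apply: limsec_ext => U h /=; rewrite add0r. Qed.
Lemma ls_addN (F : fieldType) (X : sc) (d : nat -> int) (S : psh F (basic d)) (W : {set simplex X}) : left_inverse (@ls_zero F X d S W) (@ls_opp F X d S W) (@ls_add F X d S W).
Proof. by move=> a; apply: limsec_ext => U h /=; rewrite addNr. Qed.

HB.instance Definition _ (F : fieldType) (X : sc) (d : nat -> int) (S : psh F (basic d)) (W : {set simplex X}) :=
  GRing.isZmodule.Build (@limsec F X d S W) (@ls_addA F X d S W) (@ls_addC F X d S W)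
    (@ls_add0 F X d S W) (@ls_addN F X d S W).

Lemma ls_scaleA (F : fieldType) (X : sc) (d : nat -> int) (S : psh F (basic d)) (W : {set simplex X}) (a b : F) (v : @limsec F X d S W) :
  ls_scale a (ls_scale b v) = ls_scale (a * b) v.
Proof. by apply: limsec_ext => U h /=; rewrite scalerA. Qed.
Lemma ls_scale1 (F : fieldType) (X : sc) (d : nat -> int) (S : psh F (basic d)) (W : {set simplex X}) : left_id 1 (@ls_scale F X d S W).
Proof. by move=> v; apply: limsec_ext => U h /=; rewrite scale1r. Qed.
Lemma ls_scaleDr (F : fieldType) (X : sc) (d : nat -> int) (S : psh F (basic d)) (W : {set simplex X}) : right_distributive (@ls_scale F X d S W) +%R.
Proof. by move=> a u v; apply: limsec_ext => U h /=; rewrite scalerDr. Qed.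
Lemma ls_scaleDl (F : fieldType) (X : sc) (d : nat -> int) (S : psh F (basic d)) (W : {set simplex X}) (v : @limsec F X d S W) :
  {morph (@ls_scale F X d S W)^~ v : a b / a + b}.
Proof. by move=> a b; apply: limsec_ext => U h /=; rewrite scalerDl. Qed.

HB.instance Definition _ (F : fieldType) (X : sc) (d : nat -> int) (S : psh F (basic d)) (W : {set simplex X}) :=
  GRing.Zmodule_isLmodule.Build F (@limsec F X d S W) (@ls_scaleA F X d S W)
    (@ls_scale1 F X d S W) (@ls_scaleDr F X d S W) (@ls_scaleDl F X d S W).

Program Definition ls_res (F : fieldType) (X : sc) (d : nat -> int) (S : psh F (basic d)) (W W' : {set simplex X})
  (h : W' \subset W) (a : limsec S W) : limsec S W' :=
  @LimSec F X d S W' (fun U hU => ls_fam a (subset_trans hU h)) _.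
Next Obligation. move=> *; exact: ls_compat. Qed.

Lemma ls_res_lin (F : fieldType) (X : sc) (d : nat -> int) (S : psh F (basic d)) (W W' : {set simplex X}) (h : W' \subset W) :
  linear (@ls_res (F : fieldType) (X : sc) (d : nat -> int) (S : psh F (basic d)) (W : {set simplex X}) W' h).
Proof. by move=> c u v; apply: limsec_ext => U hU. Qed.

Lemma ls_res_id (F : fieldType) (X : sc) (d : nat -> int) (S : psh F (basic d)) (W : {set simplex X}) (h : W \subset W) x :
  @ls_res (F : fieldType) (X : sc) (d : nat -> int) (S : psh F (basic d)) (W : {set simplex X}) W h x = x.
Proof. by apply: limsec_ext => U hU /=; congr ls_fam; exact: eq_irrelevance. Qed.

Lemma ls_res_comp (F : fieldType) (X : sc) (d : nat -> int) (S : psh F (basic d)) (W W' W'' : {set simplex X}) (h1 : W' \subset W)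
  (h2 : W'' \subset W') (h3 : W'' \subset W) x :
  ls_res h2 (@ls_res (F : fieldType) (X : sc) (d : nat -> int) (S : psh F (basic d)) (W : {set simplex X}) W' h1 x) = ls_res h3 x.
Proof. by apply: limsec_ext => U hU /=; congr ls_fam; exact: eq_irrelevance. Qed.

Definition PhiP (F : fieldType) (X : sc) (d : nat -> int) (S : psh F (basic d)) :
  psh F (is_open d) :=
  @Psh F X (is_open d) (fun W => [the lmodType F of limsec S (val W)])
    (fun U W h => @ls_res F X d S (val U) (val W) h)
    (fun U W h => @ls_res_lin F X d S (val U) (val W) h)
    (fun U h => @ls_res_id F X d S (val U) h)
    (fun U W Z h1 h2 h3 => @ls_res_comp F X d S (val U) (val W) (val Z) h1 h2 h3).

Program Definition lim_map (F : fieldType) (X : sc) (d : nat -> int) (S S' : psh F (basic d)) (f : pshom S S')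
  (W : {set simplex X}) (a : limsec S W) : limsec S' W :=
  @LimSec F X d S' W (fun U hU => ph_fun f U (ls_fam a hU)) _.
Next Obligation. by rewrite -ph_nat ls_compat. Qed.

Lemma lim_map_lin (F : fieldType) (X : sc) (d : nat -> int) (S S' : psh F (basic d)) (f : pshom S S') (W : {set simplex X}) :
  linear (@lim_map F X d S S' f W).
Proof. by move=> c u v; apply: limsec_ext => U hU /=; rewrite (ph_lin f). Qed.

Lemma lim_map_nat (F : fieldType) (X : sc) (d : nat -> int) (S S' : psh F (basic d)) (f : pshom S S') (W W' : {set simplex X})
  (h : W' \subset W) x :
  lim_map f (ls_res h x) = ls_res h (@lim_map F X d S S' f W x).
Proof. by apply: limsec_ext => U hU. Qed.

Definition PhiP_hom (F : fieldType) (X : sc) (d : nat -> int) (S S' : psh F (basic d))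
  (f : pshom S S') : pshom (PhiP S) (PhiP S') :=
  @PsHom F X (is_open d) (PhiP S) (PhiP S') (fun W => @lim_map F X d S S' f (val W))
    (fun W => @lim_map_lin F X d S S' f (val W))
    (fun U W h => @lim_map_nat F X d S S' f (val U) (val W) h).

From HB Require Import structures.
From mathcomp Require Import all_boot all_order all_algebra.
From Stdlib Require Import IndefiniteDescription.
Set Implicit Arguments. Unset Strict Implicit. Unset Printing Implicit Defensive.
Local Open Scope ring_scope.

(* The perverse star U(x, d) of a simplex x is the smallest open set
   containing x, and it is basic.  Hence a basic open set U(D, d) lies in an
   open set as soon as its centre D does: any open cover of W covers every
   basic subset of W by a single member, and W is covered by its basic
   subsets.  A section of a sheaf over W is therefore the same thing as a
   compatible family of sections over the basic subsets of W, which is the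
   inverse limit defining Phi^+. *)

Section PerverseStars.
Variables (X : sc) (d : nat -> int).

Lemma pstar_subset (D x : simplex X) : x \in pstar d D -> pstar d x \subset pstar d D.
Proof.
rewrite inE => Dx; apply/subsetP => y; rewrite !inE; exact: connect_trans.
Qed.

Lemma open_pstar_subset (W : {set simplex X}) (x : simplex X) :
  is_open d W -> x \in W -> pstar d x \subset W.
Proof.
move=> /forallP /(_ x) /implyP oW /oW /existsP [D /andP [xD DW]].
exact: subset_trans (pstar_subset xD) DW.
Qed.

Lemma basic_pstar (x : simplex X) : basic d (pstar d x).
Proof. by apply/existsP; exists x. Qed.

Definition pstar_bidx (x : simplex X) : bidx X d := exist _ (pstar d x) (basic_pstar x).

Lemma bidxP (U : bidx X d) : exists D, val U = pstar d D.
Proof. by case: U => U /= /existsP [D /eqP ->]; exists D. Qed.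

Lemma bidx_subset_cover (W : {set simplex X}) (I : Type) (Wi : I -> oidx X d) :
  (forall x, x \in W -> exists i, x \in val (Wi i)) ->
  forall U : bidx X d, val U \subset W -> exists i, val U \subset val (Wi i).
Proof.
move=> cover U UW; have [D UD] := bidxP U.
have [i Di] : exists i, D \in val (Wi i).
  by apply: cover; apply: (subsetP UW); rewrite UD pstar_refl.
by exists i; rewrite UD; exact: open_pstar_subset (valP (Wi i)) Di.
Qed.

Lemma bidx_subsets_cover (W : oidx X d) (x : simplex X) : x \in val W ->
  exists i : {U : bidx X d | val U \subset val W}, x \in val (b2o (val i)).
Proof.
by move=> xW; exists (exist _ (pstar_bidx x) (open_pstar_subset (valP W) xW));
  exact: pstar_refl.
Qed.

End PerverseStars.

Section Equivalence.
Variables (F : fieldType) (X : sc) (d : nat -> int).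

Lemma ls_fam_irr (S : psh F (@basic X d)) W (a : limsec S W) (U : bidx X d)
    (h1 h2 : val U \subset W) :
  ls_fam a h1 = ls_fam a h2.
Proof. by rewrite (eq_irrelevance h1 h2). Qed.

Section PhiPSheaf.
Variables (S : psh F (@basic X d)) (W : oidx X d) (I : Type) (Wi : I -> oidx X d).
Hypotheses (hi : forall i, val (Wi i) \subset val W)
           (cover : forall x, x \in val W -> exists i, x \in val (Wi i)).

Lemma PhiP_separated (s t : ps_obj (PhiP S) W) :
  (forall i, ps_res (PhiP S) (hi i) s = ps_res (PhiP S) (hi i) t) -> s = t.
Proof.
move=> st; apply: limsec_ext => U UW.
have [i UWi] := bidx_subset_cover cover UW.
have := congr1 (fun z : limsec S (val (Wi i)) => ls_fam z UWi) (st i) => /=.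
by rewrite (ls_fam_irr s _ UW) (ls_fam_irr t _ UW).
Qed.

Lemma PhiP_glue (si : forall i, ps_obj (PhiP S) (Wi i)) :
  (forall i j (V : oidx X d) (h1 : val V \subset val (Wi i))
          (h2 : val V \subset val (Wi j)),
      ps_res (PhiP S) h1 (si i) = ps_res (PhiP S) h2 (si j)) ->
  exists s : ps_obj (PhiP S) W, forall i, ps_res (PhiP S) (hi i) s = si i.
Proof.
move=> compat.
have agree i j (U : bidx X d) (h1 : val U \subset val (Wi i))
    (h2 : val U \subset val (Wi j)) : ls_fam (si i) h1 = ls_fam (si j) h2.
  have := congr1 (fun z : limsec S (val U) => ls_fam z (subxx (val U)))
    (compat i j (b2o U) h1 h2) => /=.
  by rewrite (ls_fam_irr (si i) _ h1) (ls_fam_irr (si j) _ h2).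
pose pick (U : bidx X d) (UW : val U \subset val W) :=
  constructive_indefinite_description _ (bidx_subset_cover cover UW).
unshelve eexists.
  apply: (@LimSec F X d S (val W)
    (fun U UW => ls_fam (si (proj1_sig (pick U UW))) (proj2_sig (pick U UW)))).
  move=> U U' UW U'W U'U /=.
  rewrite (ls_compat _ _ (subset_trans U'U (proj2_sig (pick U UW)))).
  exact: agree.
by move=> i; apply: limsec_ext => U UWi /=; exact: agree.
Qed.

End PhiPSheaf.

Lemma PhiP_sheaf (S : psh F (@basic X d)) : is_sheaf (PhiP S).
Proof.
move=> W I Wi hi cover; split; [exact: PhiP_separated | exact: PhiP_glue].
Qed.

Program Definition eta_fun (S : psh F (@basic X d)) (U : bidx X d) (x : ps_obj S U) :
  limsec S (val U) :=
  @LimSec F X d S (val U) (fun U' h => ps_res S h x) _.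
Next Obligation. by move=> *; exact: ps_res_comp. Qed.

Lemma eta_fun_lin (S : psh F (@basic X d)) (U : bidx X d) : linear (@eta_fun S U).
Proof. by move=> c x y; apply: limsec_ext => U' h /=; exact: (ps_res_lin S h). Qed.

Lemma eta_fun_nat (S : psh F (@basic X d)) (U W : bidx X d) (h : val W \subset val U)
    (x : ps_obj S U) :
  eta_fun (ps_res S h x) = ls_res h (eta_fun x).
Proof. by apply: limsec_ext => U' h' /=; exact: ps_res_comp. Qed.

Definition eta (S : psh F (@basic X d)) : pshom S (PhiM (PhiP S)) :=
  @PsHom F X (basic d) S (PhiM (PhiP S)) (@eta_fun S) (@eta_fun_lin S) (@eta_fun_nat S).

Definition eta_inv_fun (S : psh F (@basic X d)) (U : bidx X d) (a : limsec S (val U)) :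
  ps_obj S U :=
  ls_fam a (subxx (val U)).

Lemma eta_inv_fun_lin (S : psh F (@basic X d)) (U : bidx X d) : linear (@eta_inv_fun S U).
Proof. by []. Qed.

Lemma eta_inv_fun_nat (S : psh F (@basic X d)) (U W : bidx X d) (h : val W \subset val U)
    (a : limsec S (val U)) :
  eta_inv_fun (ls_res h a) = ps_res S h (eta_inv_fun a).
Proof. by rewrite /eta_inv_fun /= ls_compat; exact: ls_fam_irr. Qed.

Definition eta_inv (S : psh F (@basic X d)) : pshom (PhiM (PhiP S)) S :=
  @PsHom F X (basic d) (PhiM (PhiP S)) S
    (@eta_inv_fun S) (@eta_inv_fun_lin S) (@eta_inv_fun_nat S).

Lemma eta_iso (S : psh F (@basic X d)) : ps_iso (eta S).
Proof.
exists (eta_inv S); split=> U x /=; first exact: ps_res_id.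
by apply: limsec_ext => U' h /=; exact: ls_compat.
Qed.

Lemma eta_nat (S S' : psh F (@basic X d)) (f : pshom S S') (U : bidx X d) (x : ps_obj S U) :
  ph_fun (PhiM_hom (PhiP_hom f)) U (ph_fun (eta S) U x)
  = ph_fun (eta S') U (ph_fun f U x).
Proof. by apply: limsec_ext => U' h /=; exact: ph_nat. Qed.

Section Counit.
Variables (G : psh F (@is_open X d)) (hG : is_sheaf G).

Let sheaf_basic_subsets (W : oidx X d) :=
  @hG W _ (fun i => b2o (val i)) (fun i => proj2_sig i) (@bidx_subsets_cover X d W).

Lemma sheaf_separated_basic (W : oidx X d) (s t : ps_obj G W) :
  (forall (U : bidx X d) (UW : val U \subset val W),
     ps_res G (W := b2o U) UW s = ps_res G (W := b2o U) UW t) -> s = t.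
Proof.
move=> st; have [separated _] := sheaf_basic_subsets W.
by apply: separated => -[U UW]; exact: st.
Qed.

Lemma sheaf_glue_basic (W : oidx X d) (a : limsec (PhiM G) (val W)) :
  exists s : ps_obj G W, forall (U : bidx X d) (UW : val U \subset val W),
     ps_res G (W := b2o U) UW s = ls_fam a UW.
Proof.
have [_ glue] := sheaf_basic_subsets W.
have [|s sa] := glue (fun i => ls_fam a (proj2_sig i)); last first.
  by exists s => U UW; exact: (sa (exist _ U UW)).
move=> [U1 U1W] [U2 U2W] V VU1 VU2; apply: sheaf_separated_basic => U UV /=.
have UU1 := subset_trans UV VU1; have UU2 := subset_trans UV VU2.
rewrite (ps_res_comp G (Z := b2o U) VU1 UV UU1) (ps_res_comp G (Z := b2o U) VU2 UV UU2).
have -> : ps_res G (W := b2o U) UU1 (ls_fam a U1W) = ls_fam a (subset_trans UU1 U1W).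
  exact: (ls_compat a U1W).
have -> : ps_res G (W := b2o U) UU2 (ls_fam a U2W) = ls_fam a (subset_trans UU2 U2W).
  exact: (ls_compat a U2W).
exact: (@ls_fam_irr (PhiM G)).
Qed.

Definition eps_fun (W : oidx X d) (a : limsec (PhiM G) (val W)) : ps_obj G W :=
  proj1_sig (constructive_indefinite_description _ (sheaf_glue_basic a)).

Lemma eps_funE (W : oidx X d) (a : limsec (PhiM G) (val W)) (U : bidx X d)
    (UW : val U \subset val W) :
  ps_res G (W := b2o U) UW (eps_fun a) = ls_fam a UW.
Proof.
exact: (proj2_sig (constructive_indefinite_description _ (sheaf_glue_basic a))).
Qed.

Lemma eps_fun_lin (W : oidx X d) : linear (@eps_fun W).
Proof.
move=> c a b; apply: sheaf_separated_basic => U UW.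
by rewrite eps_funE (ps_res_lin G) !eps_funE.
Qed.

Lemma eps_fun_nat (W W' : oidx X d) (h : val W' \subset val W)
    (a : limsec (PhiM G) (val W)) :
  eps_fun (ls_res h a) = ps_res G h (eps_fun a).
Proof.
apply: sheaf_separated_basic => U UW'.
by rewrite eps_funE (ps_res_comp G (Z := b2o U) h UW' (subset_trans UW' h)) eps_funE.
Qed.

Definition eps : pshom (PhiP (PhiM G)) G :=
  @PsHom F X (is_open d) (PhiP (PhiM G)) G eps_fun eps_fun_lin eps_fun_nat.

Program Definition eps_inv_fun (W : oidx X d) (s : ps_obj G W) :
  limsec (PhiM G) (val W) :=
  @LimSec F X d (PhiM G) (val W) (fun U UW => ps_res G (W := b2o U) UW s) _.
Next Obligation. by move=> *; exact: ps_res_comp. Qed.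

Lemma eps_inv_fun_lin (W : oidx X d) : linear (@eps_inv_fun W).
Proof. by move=> c s t; apply: limsec_ext => U UW /=; exact: (ps_res_lin G). Qed.

Lemma eps_inv_fun_nat (W W' : oidx X d) (h : val W' \subset val W) (s : ps_obj G W) :
  eps_inv_fun (ps_res G h s) = ls_res h (eps_inv_fun s).
Proof. by apply: limsec_ext => U UW' /=; exact: ps_res_comp. Qed.

Definition eps_inv : pshom G (PhiP (PhiM G)) :=
  @PsHom F X (is_open d) G (PhiP (PhiM G)) eps_inv_fun eps_inv_fun_lin eps_inv_fun_nat.

Lemma eps_iso : ps_iso eps.
Proof.
exists eps_inv; split=> W x /=.
  by apply: limsec_ext => U UW /=; exact: eps_funE.
by apply: sheaf_separated_basic => U UW /=; exact: eps_funE.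
Qed.

End Counit.

Lemma eps_nat (G G' : psh F (@is_open X d)) (hG : is_sheaf G) (hG' : is_sheaf G')
    (f : pshom G G') (W : oidx X d) (x : ps_obj (PhiP (PhiM G)) W) :
  ph_fun f W (ph_fun (eps hG) W x)
  = ph_fun (eps hG') W (ph_fun (PhiP_hom (PhiM_hom f)) W x).
Proof.
by apply: (sheaf_separated_basic hG') => U UW /=; rewrite eps_funE -(ph_nat f) eps_funE.
Qed.

End Equivalence.

Theorem lemma2p3p5 (F : fieldType) (X : sc) (d : nat -> int) :
  sc_connected X -> cellular_perversity d ->
  (forall S : psh F (basic d), @is_sheaf F X d (PhiP S)) /\
  (exists eta : forall S : psh F (basic d), pshom S (PhiM (PhiP S)),
     (forall S, ps_iso (eta S)) /\
     (forall (S S' : psh F (basic d)) (f : pshom S S') (U : bidx X d) (x : ps_obj S U),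
        ph_fun (PhiM_hom (PhiP_hom f)) U (ph_fun (eta S) U x)
        = ph_fun (eta S') U (ph_fun f U x))) /\
  (exists eps : forall G : psh F (is_open d), @is_sheaf F X d G -> pshom (PhiP (PhiM G)) G,
     (forall G (hG : @is_sheaf F X d G), ps_iso (eps G hG)) /\
     (forall (G G' : psh F (is_open d)) (hG : @is_sheaf F X d G) (hG' : @is_sheaf F X d G')
             (f : pshom G G') (W : oidx X d) (x : ps_obj (PhiP (PhiM G)) W),
        ph_fun f W (ph_fun (eps G hG) W x)
        = ph_fun (eps G' hG') W (ph_fun (PhiP_hom (PhiM_hom f)) W x))).
Proof.
move=> _ _; split; first exact: PhiP_sheaf.
split; first by exists (@eta F X d); split; [exact: eta_iso | exact: eta_nat].
by exists (fun G hG => eps hG); split; [exact: eps_iso | exact: eps_nat].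
Qed.
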